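(* Let $n$ be a positive integer and $g=3n+1$. Then the image under $\sigma$ of $\mathcal{G}_{2n}(g,q\le 3)$ contains no pseudo-symmetric gapset, and in fact $$\sigma\big(\mathcal{G}_{2n}(g,q\le 3)\big)=\mathcal{G}_{2n+1}(g+1)\setminus\mathcal{P},$$ where $\mathcal{P}=\{G\in\mathcal{G}_{2n+1}(g+1): G \text{ is pseudo-symmetric}\}$.
   Context: A gapset is a finite set $G\subset\mathbb{N}=\{1,2,\dots\}$ such that whenever $z\in G$ and $z=x+y$ with $x,y\in\mathbb{N}$, then $x\in G$ or $y\in G$; its genus is $g=\#G$. Write $G=\{\ell_1<\dots<\ell_g\}$. The multiplicity is $m(G)=\min\{s\in\mathbb{N}:s\notin G\}$, the conductor $c(G)=\min\{s\in\mathbb{N}: s+t\notin G\ \forall t\in\mathbb{N}_0\}$, the Frobenius number $F(G)=c(G)-1$ (equal to $\ell_g$ for nonempty $G$), and the depth $q(G)=\lceil c(G)/m(G)\rceil$. $G$ is pseudo-symmetric if $F(G)=2g-2$. $G$ is pure $\kappa$-sparse if $\ell_{i+1}-\ell_i\le\kappa$ for all $i$ with equality for at least one $i$. $\mathcal{G}_\kappa(g)$ is the set of pure $\kappa$-sparse gapsets of genus $g$, and $\mathcal{G}_\kappa(g,q\le 3)$ the subset of those with depth at most $3$. For $G=\{\ell_1<\dots<\ell_g\}\in\mathcal{G}_{2n}(g)$ let $\alpha=\max\{i:\ell_{i+1}-\ell_i=2n\}$ and define $$\sigma(G)=\{1\}\cup\{\ell_i+1: 1\le i\le\alpha\}\cup\{\ell_i+2:\alpha+1\le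 i\le g\}$$ (note $\ell_1=1$, so $\sigma(G)=\{1<2<\ell_2+1<\dots<\ell_\alpha+1<\ell_{\alpha+1}+2<\dots<\ell_g+2\}$). *)

(* A gapset is represented by the strictly increasing list
   of its elements  [l_1; ...; l_g]. *)
From mathcomp Require Import all_boot.
Set Implicit Arguments.
Unset Strict Implicit.
Unset Printing Implicit Defensive.

Definition is_gapset (s : seq nat) : bool :=
  [&& sorted ltn s, all (fun x => 0 < x) s &
      all (fun z => all (fun x => (x \in s) || (z - x \in s)) (iota 1 z.-1)) s].

Definition genus (s : seq nat) : nat := size s.

(* multiplicity: least positive integer not in G (among 1..g+1 one is missing) *)
Definition multiplicity (s : seq nat) : nat :=
  head 0 [seq k <- iota 1 (size s).+1 | k \notin s].

(* conductor: least c >= 1 with c, c+1, ... all outside G; for a sorted list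
   this is (last element) + 1, and 1 for the empty gapset. *)
Definition conductor (s : seq nat) : nat := (last 0 s).+1.

Definition frobenius (s : seq nat) : nat := (conductor s).-1.

Definition depth (s : seq nat) : nat :=
  let c := conductor s in let m := multiplicity s in
  c %/ m + (c %% m != 0).

(* pseudo-symmetric: F = 2g - 2 (written F + 2 = 2g to avoid truncated subtraction) *)
Definition pseudo_symmetric (s : seq nat) : bool :=
  frobenius s + 2 == 2 * genus s.

Definition diffs (s : seq nat) : seq nat :=
  [seq p.2 - p.1 | p <- zip s (behead s)].

Definition pure_sparse (k : nat) (s : seq nat) : bool :=
  all (fun d => d <= k) (diffs s) && has (fun d => d == k) (diffs s).

Definition in_Gk (k g : nat) (s : seq nat) : bool :=
  [&& is_gapset s, pure_sparse k s & genus s == g].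

(* alpha = max{ i : l_{i+1} - l_i = k } (1-indexed, i in 1..g-1).
   With 0-indexed nth, l_{i+1} - l_i = nth 0 s i - nth 0 s i.-1. *)
Definition alpha (k : nat) (s : seq nat) : nat :=
  \max_(1 <= i < size s | nth 0 s i - nth 0 s i.-1 == k) i.

(* sigma(G) = {1} u {l_i + 1 : i <= alpha} u {l_i + 2 : i > alpha},
   listed in increasing order (0-indexed j corresponds to l_{j+1}). *)
Definition sigma (k : nat) (s : seq nat) : seq nat :=
  1 :: [seq nth 0 s j + (if j < alpha k s then 1 else 2) | j <- iota 0 (size s)].

(* Cut a gapset G at its last jump a < b of length 2n (consecutive gaps with no
   gap in between).  Then sigma(G) = {1} u ((G <= a) + 1) u ((G >= b) + 2) turns
   this jump into a jump of length 2n + 1 and keeps all other differences.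
   Pairing x with z - x for a gap z bounds the genus from below; with genus 3n + 1
   and depth at most 3 these counts give a <= 2m, every gap below b + m (m the
   multiplicity) and F != 6n.  The first two make sigma(G) a gapset, and the last
   says exactly that sigma(G) is not pseudo-symmetric.  Conversely, for H of genus
   3n + 2, not pseudo-symmetric, with largest jump 2n + 1, the same counting shows
   that the jump of length 2n + 1 is unique and that no two gaps beyond it differ
   by 2n; undoing the shift then gives a gapset G of depth at most 3 with
   sigma(G) = H.  For n = 1 the bound on the gaps beyond b fails (for instance for
   {1, 2, 4, 7}), and the finitely many gapsets of genus 4 and 5 are checked by
   computation. *)

From mathcomp Require Import all_boot zify.
Set Implicit Arguments. Unset Strict Implicit. Unset Printing Implicit Defensive.

Lemma diffs_cons2 x y t : diffs [:: x, y & t] = (y - x) :: diffs (y :: t).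
Proof. by []. Qed.

Lemma nth_diffs (s : seq nat) j : nth 0 (diffs s) j = nth 0 s j.+1 - nth 0 s j.
Proof.
elim: s j => [|x [|y t] IH] j; first by rewrite !nth_nil.
  by case: j => [|[|j]] //=; rewrite ?nth_nil.
by rewrite diffs_cons2; case: j => [|j] //=; rewrite ?IH.
Qed.

Lemma size_diffs (s : seq nat) : size (diffs s) = (size s).-1.
Proof. by rewrite size_map size_zip size_behead; case: s => //= x s; lia. Qed.

Lemma diffs_cat (u v : seq nat) : u != [::] -> v != [::] ->
  diffs (u ++ v) = diffs u ++ (head 0 v - last 0 u) :: diffs v.
Proof.
move=> + vn; case: v vn => // y v _; elim: u => // x [|x' u] IH _ /=; first by rewrite diffs_cons2.
by rewrite diffs_cons2 IH.
Qed.

Lemma diffs_map_add c (s : seq nat) : diffs (map (addn c) s) = diffs s.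
Proof.
elim: s => // x [|y t] IH //=; rewrite !diffs_cons2 -IH /=; congr (_ :: _); lia.
Qed.

Lemma diffs_map_succ (s : seq nat) : diffs (map succn s) = diffs s.
Proof. by rewrite -[RHS](diffs_map_add 1); congr diffs; apply: eq_map => x; rewrite add1n. Qed.

Lemma mem_diffsP d (s : seq nat) : d \in diffs s ->
  exists s1 y z s2, s = s1 ++ [:: y, z & s2] /\ d = z - y.
Proof.
elim: s => // x [|y t] IH //; rewrite diffs_cons2 inE => /orP[/eqP ->|/IH].
  by exists [::], x, y, t.
by move=> [s1 [y' [z [s2 [-> ->]]]]]; exists (x :: s1), y', z, s2.
Qed.

Lemma split_last_diff k (s : seq nat) : k \in diffs s ->
  exists u v, [/\ s = u ++ v, u != [::], v != [::], head 0 v - last 0 u = k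
                & k \notin diffs v].
Proof.
elim: s => // x [|y t] IH //; rewrite diffs_cons2 inE.
case kt: (k \in diffs (y :: t)).
  have [u [v [-> un vn hv kv]]] := IH kt.
  by exists (x :: u), v; split => //; case: u un hv {kt} => //= z u _.
by rewrite orbF => /eqP kE; exists [:: x], (y :: t); rewrite kt kE.
Qed.

Section LastJump.
Variables (k : nat) (u v : seq nat).
Hypotheses (u_neq0 : u != [::]) (v_neq0 : v != [::]).
Hypotheses (jump_uv : head 0 v - last 0 u = k) (no_jump_v : k \notin diffs v).

Lemma alpha_cat : alpha k (u ++ v) = size u.
Proof.
have su : 0 < size u by rewrite lt0n size_eq0.
apply/eqP; rewrite eqn_leq; apply/andP; split.
  apply/bigmax_leqP_seq => i; rewrite mem_index_iota size_cat => /andP[i1 i2] /eqP hi.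
  rewrite leqNgt; apply/negP => lt_ui; move/negP: no_jump_v; apply.
  move: hi; rewrite !nth_cat ltnNge (ltnW lt_ui) /= ltnNge (_ : size u <= i.-1); last by lia.
  rewrite (_ : i - size u = (i.-1 - size u).+1); last by lia.
  move=> <-; rewrite -nth_diffs; apply: mem_nth; rewrite size_diffs; lia.
apply: (@leq_bigmax_seq _ _ _ id (size u)).
  by rewrite mem_index_iota size_cat su /= -addn1 leq_add2l lt0n size_eq0.
rewrite !nth_cat ltnn subnn (_ : (size u).-1 < size u) ?nth_last; last by lia.
by rewrite -jump_uv; case: (v) v_neq0.
Qed.

Definition sigma_split := 1 :: map succn u ++ map (addn 2) v.

Lemma sigma_cat : sigma k (u ++ v) = sigma_split.
Proof.
rewrite /sigma alpha_cat /sigma_split size_cat iotaD map_cat; congr (_ :: _ ++ _).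
  rewrite -[in RHS](mkseq_nth 0 u) /mkseq -map_comp; apply/eq_in_map => j.
  by rewrite mem_iota add0n /= => hj; rewrite nth_cat hj addn1.
rewrite -[in RHS](mkseq_nth 0 v) /mkseq -map_comp add0n -[size u]addn0 iotaDl -map_comp.
by apply/eq_in_map => j _ /=; rewrite addn0 nth_cat ltnNge leq_addr /= addKn addnC.
Qed.

End LastJump.

Definition cnt (P : pred nat) p q := count P (iota p (q - p)).

Section Count.
Variable P : pred nat.

Lemma cnt_split p q r : p <= q -> q <= r -> cnt P p r = cnt P p q + cnt P q r.
Proof.
move=> pq qr; rewrite /cnt (_ : r - p = (q - p) + (r - q)); last by lia.
by rewrite iotaD count_cat subnKC.
Qed.

Lemma cnt_all p q : (forall x, p <= x < q -> P x) -> cnt P p q = q - p.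
Proof.
move=> h; rewrite /cnt -{2}(size_iota p (q - p)) -count_predT.
by apply: eq_in_count => x; rewrite mem_iota => hx; rewrite h //; lia.
Qed.

Lemma cnt_none p q : (forall x, p <= x < q -> ~~ P x) -> cnt P p q = 0.
Proof.
move=> h; apply/eqP; rewrite -leqn0 leqNgt -has_count; apply/hasP => -[x].
by rewrite mem_iota => hx; apply/negP/h; lia.
Qed.

Lemma cnt_gt0 p q x : p <= x < q -> P x -> 0 < cnt P p q.
Proof. by move=> hx Px; rewrite -has_count; apply/hasP; exists x; rewrite // mem_iota; lia. Qed.

Lemma cnt1 p : P p -> cnt P p p.+1 = 1.
Proof. by move=> h; rewrite /cnt subSnn /= h. Qed.

Lemma map_subn_iota z p l : p + l <= z.+1 ->
  map (fun x => z - x) (iota p l) = rev (iota (z.+1 - (p + l)) l).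
Proof.
elim: l p => // l IH p h; rewrite /= IH; last by lia.
rewrite (_ : z.+1 - (p.+1 + l) = z.+1 - (p + l.+1)); last by lia.
have : z.+1 - (p + l.+1) + l = z - p by lia.
move: (z.+1 - _) => s e.
have -> : s :: iota s.+1 l = iota s (l + 1) by rewrite addn1.
by rewrite iotaD rev_cat /= e.
Qed.

(* Each x in [p, q) is counted either in [p, q) or, through z - x, in the mirror interval. *)
Lemma cnt_pair_bound z p q : p <= q -> q <= z.+1 ->
  (forall x, p <= x < q -> P x || P (z - x)) ->
  q - p <= cnt P p q + cnt P (z.+1 - q) (z.+1 - p).
Proof.
move=> pq qz h.
have -> : cnt P (z.+1 - q) (z.+1 - p) = count (fun x => P (z - x)) (iota p (q - p)).
  rewrite /cnt -(count_map (fun x => z - x)) map_subn_iota; last by lia.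
  by rewrite count_rev; congr (count _ (iota _ _)); lia.
rewrite /cnt -count_predUI; apply: leq_trans (leq_addr _ _).
rewrite -{1}(size_iota p (q - p)) -count_predT; apply: eq_leq.
by apply: eq_in_count => x; rewrite mem_iota => hx /=; rewrite h //; lia.
Qed.

Lemma cnt_pair_bound_sym z p q : p <= q -> p + q = z.+1 ->
  (forall x, p <= x < q -> P x || P (z - x)) -> q - p <= 2 * cnt P p q.
Proof.
move=> pq e h; have qz : q <= z.+1 by lia.
have := cnt_pair_bound pq qz h.
by rewrite (_ : z.+1 - q = p) 1?(_ : z.+1 - p = q); lia.
Qed.

End Count.

Lemma gap_split_of_nongap_add (Q : pred nat) :
  (forall x y, 0 < x -> 0 < y -> ~~ Q x -> ~~ Q y -> ~~ Q (x + y)) ->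
  forall z x, Q z -> 0 < x < z -> Q x || Q (z - x).
Proof.
move=> nongapQ z x Qz hx; apply/negPn/negP => /norP[Qx Qzx].
have := nongapQ x (z - x) ltac:(lia) ltac:(lia) Qx Qzx.
by rewrite subnKC ?Qz //; lia.
Qed.

(* For a gapset P with a jump a < b, [sigma_pred P a b] is the gapset obtained by
   adding 1 to the gaps up to a, 2 to the gaps from b on, and inserting the gap 1;
   [sigma_inv_pred] undoes this. *)
Definition sigma_pred (P : pred nat) a b x :=
  (x == 1) || ((1 < x <= a.+1) && P x.-1) || ((b.+2 <= x) && P (x - 2)).

Definition sigma_inv_pred (P : pred nat) a b x :=
  ((0 < x) && (x.+1 <= a) && P x.+1) || ((b <= x.+2) && P x.+2).

(* The counting identities are irrelevant to side conditions and make [lia] slow. *)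
Ltac lia_arith := repeat match goal with H : context [cnt _ _ _] |- _ => clear H end; lia.

Section Gapset.
Variable P : pred nat.
Hypothesis gap0 : ~~ P 0.
Hypothesis gap_split : forall z x, P z -> 0 < x < z -> P x || P (z - x).

Lemma nongap_add x y : ~~ P x -> ~~ P y -> ~~ P (x + y).
Proof.
move=> hx hy; apply/negP => hz.
case: x hx hz => [|x] hx hz; first by move/negP: hy.
case: y hy hz => [|y] hy hz; first by rewrite addn0 in hz; move/negP: hx.
have /orP[] := gap_split (x := x.+1) hz ltac:(lia); first by move/negP: hx.
by rewrite addKn; move/negP: hy.
Qed.

Lemma gap_or_sub z x : P z -> x <= z -> P x || P (z - x).
Proof.
move=> Pz xz; case: x xz => [|x] xz; first by rewrite subn0 Pz orbT.
have [lt_xz|] := ltnP x.+1 z; first by apply: gap_split => //; lia.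
by rewrite leq_eqVlt ltnNge xz orbF => /eqP <-; rewrite Pz.
Qed.

Variable m : nat.
Hypothesis mult_gt0 : 0 < m.
Hypothesis gap_lt_mult : forall x, 0 < x < m -> P x.
Hypothesis nongap_mult : ~~ P m.

Lemma mult_le_nongap x : 0 < x -> ~~ P x -> m <= x.
Proof. by move=> x0 nx; rewrite leqNgt; apply: contra nx => lt; apply: gap_lt_mult; lia. Qed.

Lemma nongap_mulnm k : ~~ P (k * m).
Proof. by elim: k => [|k IH] //; rewrite mulSn nongap_add. Qed.

(* A jump of length d between consecutive gaps a < a + d forces d <= m:
   otherwise a + d = m + (a + d - m) writes a gap as a sum of two non-gaps. *)
Lemma jump_mult_bounds a d : 1 < d -> P a -> P (a + d) ->
  (forall x, a < x < a + d -> ~~ P x) -> d <= m <= a.+1.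
Proof.
move=> d1 Pa Pb jump; apply/andP; split; last by apply: mult_le_nongap; rewrite ?jump; lia.
rewrite leqNgt; apply/negP => md.
have := gap_or_sub (x := m) Pb ltac:(lia); rewrite (negbTE nongap_mult) /=.
by apply/negP/jump; lia.
Qed.

Lemma cnt_below_mult k : 0 < k <= m -> cnt P 0 k = k.-1.
Proof.
move=> hk; rewrite (@cnt_split P 0 1 k) ?(@cnt_none P 0 1) ?(@cnt_all P 1 k) //; try lia.
  by move=> x hx; apply: gap_lt_mult; lia.
by move=> x; rewrite ltnS leqn0 => /eqP ->.
Qed.

Lemma gap_mirror_interval c a b : P c -> b <= c -> (forall x, a < x < b -> ~~ P x) ->
  forall x, c - b < x < c - a -> P x.
Proof.
move=> Pc bc nongap x hx; have := gap_or_sub (x := c - x) Pc ltac:(lia).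
by rewrite (_ : c - (c - x) = x) ?(negbTE (nongap (c - x) _)) //; lia.
Qed.

Section Shift.
Variables a b : nat.
Hypothesis jump : forall x, a < x < b -> ~~ P x.
Hypothesis mult_le : m <= a.+1.
Hypothesis gap_lt_jump_add_mult : forall c, P c -> c < b + m.

Lemma sigma_pred_split : a < b -> a <= 2 * m ->
  forall z x, sigma_pred P a b z -> 0 < x < z ->
    sigma_pred P a b x || sigma_pred P a b (z - x).
Proof.
move=> ab a2m; apply: gap_split_of_nongap_add => x y x0 y0.
have nongap_pred t : 0 < t -> ~~ sigma_pred P a b t -> m < t /\ (t <= b -> ~~ P t.-1).
  move=> t0 /norP[/norP[t1 lo] _].
  have t2 : 1 < t by move: t1; rewrite eqn_leq; lia.
  have [ta|ta] := leqP t a.+1; last by split=> [|tb]; [lia | apply: jump; lia].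
  have np : ~~ P t.-1 by apply: contra lo => ->; rewrite t2 ta.
  by have := mult_le_nongap (x := t.-1) ltac:(lia) np; split=> //; lia.
move=> /(nongap_pred x x0)[mx px] /(nongap_pred y y0)[my py].
have hP : ~~ P (x + y - 2).
  have [hbm|hbm] := leqP (b + m) (x + y - 2); first by apply/negP => /gap_lt_jump_add_mult; lia.
  have := nongap_add (px ltac:(lia)) (py ltac:(lia)).
  by rewrite (_ : x.-1 + y.-1 = x + y - 2) //; lia.
rewrite /sigma_pred; apply/negP => /orP[/orP[/eqP h|/andP[h _]]|/andP[_ h]]; [lia | lia | ].
by move/negP: hP.
Qed.

Lemma sigma_inv_pred_split : a.+2 < b -> a.+2 <= 2 * m ->
  forall z x, sigma_inv_pred P a b z -> 0 < x < z ->
    sigma_inv_pred P a b x || sigma_inv_pred P a b (z - x).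
Proof.
move=> ab a2m; apply: gap_split_of_nongap_add => x y x0 y0.
have nongap_pred t : 0 < t -> ~~ sigma_inv_pred P a b t ->
    m <= t.+1 /\ (t.+1 < b -> ~~ P t.+1).
  move=> t0 /norP[lo _].
  have [ta|ta] := leqP t.+1 a; last by split=> [|tb]; [lia | apply: jump; lia].
  have np : ~~ P t.+1 by apply: contra lo => ->; rewrite t0 ta.
  by split=> //; apply: mult_le_nongap.
move=> /(nongap_pred x x0)[mx px] /(nongap_pred y y0)[my py].
have hP : ~~ P (x + y).+2.
  have [hbm|hbm] := leqP (b + m) (x + y).+2; first by apply/negP => /gap_lt_jump_add_mult; lia.
  have := nongap_add (px ltac:(lia)) (py ltac:(lia)).
  by rewrite (_ : x.+1 + y.+1 = (x + y).+2) //; lia.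
rewrite /sigma_inv_pred; apply/negP => /orP[/andP[/andP[_ h] _]|/andP[_ h]]; first by lia.
by move/negP: hP.
Qed.

End Shift.

Variable F : nat.
Hypothesis gap_frob : P F.
Hypothesis gap_le_frob : forall x, P x -> x <= F.

Lemma genus_ge_frob : F.+1 <= 2 * cnt P 0 F.+1.
Proof.
have := @cnt_pair_bound_sym P F 0 F.+1 isT erefl.
by rewrite subn0; apply=> x /andP[_ hx]; apply: gap_or_sub.
Qed.

Ltac split_cnt h p q r := have h := @cnt_split P p q r ltac:(lia_arith) ltac:(lia_arith).

(* Pairing x with z - x covers [0, z]; the pair x0, z - x0 contributes two gaps. *)
Lemma genus_two_gaps z x0 : P z -> 0 < x0 -> x0.*2 < z -> P x0 -> P (z - x0) -> z <= F ->
  z.+3 <= 2 * cnt P 0 F.+1.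
Proof.
move=> Pz x00 hx Px Pzx zF.
have outer : x0 <= cnt P 0 x0 + cnt P (z - x0).+1 z.+1.
  have := @cnt_pair_bound P z 0 x0; rewrite !subn0 (_ : z.+1 - x0 = (z - x0).+1); last by lia.
  by apply; [lia | lia | move=> x hxx; apply: gap_or_sub => //; lia].
have inner : z - x0 - x0.+1 <= 2 * cnt P x0.+1 (z - x0).
  by apply: (@cnt_pair_bound_sym P z); [lia | lia | move=> x hxx; apply: gap_or_sub => //; lia].
split_cnt e1 0 x0 F.+1; split_cnt e2 x0 x0.+1 F.+1; split_cnt e3 x0.+1 (z - x0) F.+1.
split_cnt e4 (z - x0) (z - x0).+1 F.+1; split_cnt e5 (z - x0).+1 z.+1 F.+1.
rewrite cnt1 // in e2; rewrite cnt1 // in e4; lia.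
Qed.

Section JumpG.
Variables n a : nat.
Hypothesis n_gt1 : 1 < n.
Hypotheses (gap_a : P a) (gap_b : P (a + 2 * n)).
Hypothesis jump : forall x, a < x < a + 2 * n -> ~~ P x.
Hypothesis genus : cnt P 0 F.+1 = 3 * n + 1.
Hypothesis depth3 : F.+1 <= 3 * m.

Let jumpG_mult : 2 * n <= m <= a.+1.
Proof. by apply: jump_mult_bounds; rewrite // ?jump; lia. Qed.

Let jumpG_genus :
  [/\ 3 * n + 1 = (2 * n).-1 + cnt P (2 * n) a.+1 + 1 + cnt P (a + 2 * n).+1 F.+1,
      a.+1 - 2 * n <= 2 * cnt P (2 * n) a.+1 & a + 2 * n < F -> 0 < cnt P (a + 2 * n).+1 F.+1].
Proof.
have /andP[hm1 hm2] := jumpG_mult; have bF := gap_le_frob gap_b.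
split; last by move=> h; apply: (@cnt_gt0 P _ _ F) => //; lia.
  split_cnt e1 0 (2 * n) F.+1; split_cnt e2 (2 * n) a.+1 F.+1.
  split_cnt e3 a.+1 (a + 2 * n) F.+1; split_cnt e4 (a + 2 * n) (a + 2 * n).+1 F.+1.
  rewrite (@cnt_below_mult (2 * n)) in e1; last by lia.
  rewrite (@cnt_none P a.+1 (a + 2 * n)) in e3; last by move=> x hx; apply: jump; lia.
  rewrite cnt1 // in e4; lia.
apply: (@cnt_pair_bound_sym P (a + 2 * n)); [lia | lia | ].
by move=> x hx; apply: gap_or_sub => //; lia.
Qed.

Lemma jumpG_le_2mult : a <= 2 * m.
Proof.
have /andP[hm1 hm2] := jumpG_mult; have [e mid above] := jumpG_genus.
have bF := gap_le_frob gap_b.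
rewrite leqNgt; apply/negP => h.
by case: (ltngtP (a + 2 * n) F) => hF; [have := above hF | |]; lia.
Qed.

(* A gap c >= b + m would mirror the empty interval (a, b) into 2n - 1 gaps
   above m, too many for the genus. *)
Lemma jumpG_gap_lt c : P c -> c < a + 2 * n + m.
Proof.
move=> Pc; rewrite ltnNge; apply/negP => hc.
have /andP[hm1 hm2] := jumpG_mult; have [e mid above] := jumpG_genus.
have cF := gap_le_frob Pc.
have mirror := @gap_mirror_interval c a (a + 2 * n) Pc ltac:(lia) jump.
have below := @cnt_below_mult m ltac:(lia).
have gaps_mirror : cnt P (c - (a + 2 * n)).+1 (c - a) = 2 * n - 1.
  by rewrite cnt_all => [|x hx]; [lia | apply: mirror; lia].
have c1 := cnt1 Pc.
split_cnt f1 0 m F.+1; split_cnt f2 m (c - (a + 2 * n)).+1 F.+1.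
split_cnt f3 (c - (a + 2 * n)).+1 (c - a) F.+1.
have [hca|hca] := leqP c (a.*2).+1.
  split_cnt f4 (c - a) (a + 2 * n) F.+1; split_cnt f5 (a + 2 * n) (a + 2 * n).+1 F.+1.
  split_cnt f6 (a + 2 * n).+1 c F.+1; split_cnt f7 c c.+1 F.+1; lia.
have hb : a + 2 * n <= c - (a + 2 * n) + 1.
  rewrite leqNgt; apply/negP => h.
  have := mirror (maxn (c - (a + 2 * n)).+1 a.+1) ltac:(lia).
  by apply/negP/jump; lia.
split_cnt f4 (c - a) c F.+1; split_cnt f5 c c.+1 F.+1; lia.
Qed.

Lemma jumpG_frob_neq : F != 6 * n.
Proof.
have /andP[hm1 hm2] := jumpG_mult; have bF := gap_le_frob gap_b.
apply/eqP => F6; have [hF|hF|hF] := ltngtP (a + 2 * n) F; [|lia|]; last first.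
  have [P2n|P2n] := boolP (P (2 * n)); last first.
    by move/negP: (nongap_add P2n P2n); rewrite (_ : 2 * n + 2 * n = a); last by lia.
  have := @genus_two_gaps (a + 2 * n) (2 * n) gap_b ltac:(lia) ltac:(lia) P2n.
  rewrite (_ : a + 2 * n - 2 * n = a); last by lia.
  by rewrite gap_a => /(_ isT bF); lia.
have m3n : m <= 3 * n.
  have below := @cnt_below_mult m ltac:(lia).
  have cF := cnt1 gap_frob; have cb := cnt1 gap_b.
  split_cnt f1 0 m F.+1; split_cnt f2 m (a + 2 * n) F.+1.
  split_cnt f3 (a + 2 * n) (a + 2 * n).+1 F.+1; split_cnt f4 (a + 2 * n).+1 F F.+1; lia.
have hFb := jumpG_gap_lt gap_frob.
have Px0 : P (F - (a + 2 * n)) by apply: gap_lt_mult; lia.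
have := @genus_two_gaps F (F - (a + 2 * n)) gap_frob ltac:(lia) ltac:(lia) Px0.
rewrite (_ : F - (F - (a + 2 * n)) = a + 2 * n); last by lia.
by rewrite gap_b => /(_ isT (leqnn F)); lia.
Qed.

End JumpG.

Section JumpH.
Variables n a : nat.
Hypothesis n_gt1 : 1 < n.
Hypotheses (gap_a : P a) (gap_b : P (a + (2 * n + 1))).
Hypothesis jump : forall x, a < x < a + (2 * n + 1) -> ~~ P x.
Hypothesis genus : cnt P 0 F.+1 = 3 * n + 2.
Hypothesis not_pseudo_symmetric : F != 6 * n + 2.

Let jumpH_mult : 2 * n + 1 <= m <= a.+1.
Proof. by apply: jump_mult_bounds; rewrite // ?jump; lia. Qed.

Let jumpH_genus :
  [/\ 3 * n + 2 = 2 * n + cnt P (2 * n + 1) a.+1 + 1 + cnt P (a + (2 * n + 1)).+1 F.+1,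
      a.+1 - (2 * n + 1) <= 2 * cnt P (2 * n + 1) a.+1
    & a + (2 * n + 1) < F -> 0 < cnt P (a + (2 * n + 1)).+1 F.+1].
Proof.
have /andP[hm1 hm2] := jumpH_mult; have bF := gap_le_frob gap_b.
split; last by move=> h; apply: (@cnt_gt0 P _ _ F) => //; lia.
  split_cnt e1 0 (2 * n + 1) F.+1; split_cnt e2 (2 * n + 1) a.+1 F.+1.
  split_cnt e3 a.+1 (a + (2 * n + 1)) F.+1.
  split_cnt e4 (a + (2 * n + 1)) (a + (2 * n + 1)).+1 F.+1.
  rewrite (@cnt_below_mult (2 * n + 1)) in e1; last by lia.
  rewrite (@cnt_none P a.+1 (a + (2 * n + 1))) in e3; last by move=> x hx; apply: jump; lia.
  rewrite cnt1 // in e4; lia.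
apply: (@cnt_pair_bound_sym P (a + (2 * n + 1))); [lia | lia | ].
by move=> x hx; apply: gap_or_sub => //; lia.
Qed.

Lemma jumpH_le_2mult : a.+2 <= 2 * m.
Proof.
have /andP[hm1 hm2] := jumpH_mult; have [e mid above] := jumpH_genus.
have bF := gap_le_frob gap_b; have full := genus_ge_frob.
rewrite leqNgt; apply/negP => h.
have hFb : F = a + (2 * n + 1).
  by case: (ltngtP (a + (2 * n + 1)) F) => hF; [have := above hF | |]; lia.
have hm : m = 2 * n + 1 by lia.
have [ha|ha] : a = 4 * n + 1 \/ a = 4 * n + 2 by lia.
  by move/eqP: not_pseudo_symmetric; lia.
by move/negP: (nongap_mulnm 2); rewrite (_ : 2 * m = a); last by lia.
Qed.

Lemma jumpH_gap_lt c : P c -> c < a + (2 * n + 1) + m.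
Proof.
have /andP[hm1 hm2] := jumpH_mult; have [e mid above] := jumpH_genus.
move=> Pc; rewrite ltnNge; apply/negP => hc.
have cF := gap_le_frob Pc.
have mirror := @gap_mirror_interval c a (a + (2 * n + 1)) Pc ltac:(lia) jump.
have below := @cnt_below_mult m ltac:(lia).
have gaps_mirror : cnt P (c - (a + (2 * n + 1))).+1 (c - a) = 2 * n.
  by rewrite cnt_all => [|x hx]; [lia | apply: mirror; lia].
have c1 := cnt1 Pc.
split_cnt f1 0 m F.+1; split_cnt f2 m (c - (a + (2 * n + 1))).+1 F.+1.
split_cnt f3 (c - (a + (2 * n + 1))).+1 (c - a) F.+1.
split_cnt f4 (c - a) c F.+1; split_cnt f5 c c.+1 F.+1; lia.
Qed.

Lemma jumpH_depth : F.+2 <= 3 * m.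
Proof.
have /andP[hm1 hm2] := jumpH_mult; have [e mid above] := jumpH_genus.
have full := genus_ge_frob.
rewrite leqNgt; apply/negP => h.
have hm : m = 2 * n + 1 by lia.
have [hF|hF] : F = 6 * n + 2 \/ F = 6 * n + 3 by lia.
  by move/eqP: not_pseudo_symmetric; lia.
by move/negP: (nongap_mulnm 3); rewrite (_ : 3 * m = F); last by lia.
Qed.

Lemma jumpH_unique a1 : a1 + (2 * n + 1) <= a -> P a1 -> P (a1 + (2 * n + 1)) ->
  ~ (forall x, a1 < x < a1 + (2 * n + 1) -> ~~ P x).
Proof.
have /andP[hm1 hm2] := jumpH_mult; have [e mid above] := jumpH_genus.
move=> ha1 Pa1 Pb1 jump1; have bF := gap_le_frob gap_b.
have mirror := @gap_mirror_interval (a + (2 * n + 1)) a1 (a1 + (2 * n + 1)) gap_b ltac:(lia) jump1.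
have gaps_mirror : cnt P (a + (2 * n + 1) - (a1 + (2 * n + 1))).+1 (a + (2 * n + 1) - a1) = 2 * n.
  by rewrite cnt_all => [|x hx]; [lia | apply: mirror; lia].
split_cnt f1 0 (2 * n + 1) F.+1.
split_cnt f2 (2 * n + 1) (a + (2 * n + 1) - (a1 + (2 * n + 1))).+1 F.+1.
split_cnt f3 (a + (2 * n + 1) - (a1 + (2 * n + 1))).+1 (a + (2 * n + 1) - a1) F.+1.
split_cnt f4 (a + (2 * n + 1) - a1) (a + (2 * n + 1)) F.+1.
split_cnt f5 (a + (2 * n + 1)) (a + (2 * n + 1)).+1 F.+1.
split_cnt g1 (2 * n + 1) a.+1 F.+1; split_cnt g2 a.+1 (a + (2 * n + 1)) F.+1.
rewrite (@cnt_none P a.+1 (a + (2 * n + 1))) in g2; last by move=> x hx; apply: jump; lia.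
lia.
Qed.

(* Otherwise c + 2n - m is a gap strictly inside the jump (a, b). *)
Lemma jumpH_no_gap_pair c : a + (2 * n + 1) <= c -> P c -> ~~ P (c + 2 * n).
Proof.
have /andP[hm1 hm2] := jumpH_mult; have [e mid above] := jumpH_genus.
move=> hc Pc; apply/negP => Pc2.
have c2F := gap_le_frob Pc2.
have P2n : P (2 * n) by apply: gap_lt_mult; lia.
have hc2 : c + 2 * n <= 6 * n + 1.
  have := @genus_two_gaps (c + 2 * n) (2 * n) Pc2 ltac:(lia) ltac:(lia) P2n.
  rewrite (_ : c + 2 * n - 2 * n = c); last by lia.
  by rewrite Pc => /(_ isT c2F); lia.
have hlt := jumpH_gap_lt Pc2.
have := gap_or_sub (x := c + 2 * n - m) Pc2 ltac:(lia).
rewrite (_ : c + 2 * n - (c + 2 * n - m) = m); last by lia.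
by rewrite (negbTE nongap_mult) orbF; apply/negP/jump; lia.
Qed.

End JumpH.

End Gapset.

Lemma depth_le3 (s : seq nat) : 0 < multiplicity s ->
  (depth s <= 3) = (conductor s <= 3 * multiplicity s).
Proof.
rewrite /depth; move: (conductor s) (multiplicity s) => c m m0.
rewrite [in RHS](divn_eq c m); have := ltn_pmod c m0.
move: (c %/ m) (c %% m) => q r hr; have [->|rn] /= := eqVneq r 0.
  by rewrite !addn0 leq_pmul2r.
apply/idP/idP => h.
  have : q * m <= 2 * m by rewrite leq_pmul2r //; lia.
  lia.
rewrite leqNgt; apply/negP => hq.
have : 3 * m <= q * m by rewrite leq_pmul2r //; lia.
lia.
Qed.

Lemma mem_last0 (s : seq nat) : s != [::] -> last 0 s \in s.
Proof. by case: s => // y t _; apply: mem_last. Qed.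

Lemma mem_head0 (s : seq nat) : s != [::] -> head 0 s \in s.
Proof. by case: s => // y t _; rewrite inE eqxx. Qed.

Lemma sorted_leq_last (s : seq nat) x : sorted ltn s -> x \in s -> x <= last 0 s.
Proof.
rewrite (sorted_pairwise ltn_trans); case/lastP: s => // s l.
rewrite last_rcons -cats1 pairwise_cat => /and3P[/allrelP h _ _].
by rewrite mem_cat inE => /orP[xs|/eqP -> //]; apply/ltnW/h; rewrite ?inE.
Qed.

Lemma sorted_head_leq (s : seq nat) x : sorted ltn s -> x \in s -> head 0 s <= x.
Proof.
case: s => // y t; rewrite (sorted_pairwise ltn_trans) /= => /andP[/allP h _].
by rewrite inE => /orP[/eqP -> //|/h /ltnW].
Qed.

Section SortedCat.
Variables u v : seq nat.
Hypotheses (u_neq0 : u != [::]) (v_neq0 : v != [::]).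
Hypothesis sorted_uv : sorted ltn (u ++ v).

Lemma last_lt_head : last 0 u < head 0 v.
Proof.
move: sorted_uv; rewrite (sorted_pairwise ltn_trans) pairwise_cat => /and3P[/allrelP lt_uv _ _].
by apply: lt_uv; [apply: mem_last0 | apply: mem_head0].
Qed.

Lemma sorted_catl : sorted ltn u.
Proof. by move: sorted_uv; rewrite !(sorted_pairwise ltn_trans) pairwise_cat => /and3P[]. Qed.

Lemma sorted_catr : sorted ltn v.
Proof. by move: sorted_uv; rewrite !(sorted_pairwise ltn_trans) pairwise_cat => /and3P[]. Qed.

Lemma mem_catl x : (x \in u) = (x \in u ++ v) && (x <= last 0 u).
Proof.
rewrite mem_cat; have [xu|] /= := boolP (x \in u); first by rewrite sorted_leq_last ?sorted_catl.
case: (boolP (x \in v)) => //= /(sorted_head_leq sorted_catr); have := last_lt_head; lia.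
Qed.

Lemma mem_catr x : (x \in v) = (x \in u ++ v) && (head 0 v <= x).
Proof.
rewrite mem_cat; have [xv|] /= := boolP (x \in v).
  by rewrite orbT sorted_head_leq ?sorted_catr.
rewrite orbF; case: (boolP (x \in u)) => //= /(sorted_leq_last sorted_catl).
by have := last_lt_head; lia.
Qed.

Lemma notin_cat_between x : last 0 u < x < head 0 v -> x \notin u ++ v.
Proof.
move=> hx; rewrite mem_cat; apply/norP; split; apply/negP.
  by move=> /(sorted_leq_last sorted_catl); lia.
by move=> /(sorted_head_leq sorted_catr); lia.
Qed.

End SortedCat.

Lemma sorted_adjacent (p q : seq nat) x y : sorted ltn (p ++ [:: x, y & q]) ->
  x < y /\ forall t, x < t < y -> t \notin p ++ [:: x, y & q].
Proof.
rewrite -cat_rcons => srt; have nx : rcons p x != [::] by case: p {srt}.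
have := @last_lt_head _ (y :: q) nx isT srt; rewrite last_rcons /= => xy.
by split=> // t ht; apply: (@notin_cat_between _ (y :: q) nx isT srt); rewrite last_rcons.
Qed.

Lemma is_gapsetP (s : seq nat) :
  reflect [/\ sorted ltn s, forall x, x \in s -> 0 < x &
              forall z x, z \in s -> 0 < x < z -> (x \in s) || (z - x \in s)]
          (is_gapset s).
Proof.
apply: (iffP and3P) => [[srt /allP pos /allP cl] | [srt pos cl]].
  split => // z x zs hx; have /allP := cl z zs; apply; rewrite mem_iota; lia.
split => //; first by apply/allP.
by apply/allP => z zs; apply/allP => x; rewrite mem_iota => hx; apply: cl => //; lia.
Qed.

Lemma cnt_mem (s : seq nat) N : uniq s -> (forall x, x \in s -> x < N) ->
  cnt (mem s) 0 N = size s.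
Proof.
move=> us hN; rewrite /cnt subn0 -size_filter; apply/perm_size/uniq_perm.
- by rewrite filter_uniq ?iota_uniq.
- by [].
by move=> x; rewrite mem_filter mem_iota /=; case: (boolP (x \in s)) => // /hN; lia.
Qed.

Lemma head_filter_iota (Q : pred nat) p k x : p <= x < p + k -> Q x ->
  let h := head 0 [seq y <- iota p k | Q y] in
  [/\ p <= h < p + k, Q h & forall y, p <= y < h -> ~~ Q y].
Proof.
elim: k p => [|k IH] p hx Qx /=; first by lia.
have [Qp|nQp] /= := boolP (Q p); first by split=> // [|y]; lia.
have xp : x != p by apply: contraNneq nQp => <-.
have hx' : p.+1 <= x < p.+1 + k by lia.
have [h1 h2 h3] := IH p.+1 hx' Qx; split => // [|y hy]; first by lia.
by have [->|yp] := eqVneq y p; last by apply: h3; lia.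
Qed.

Section Multiplicity.
Variable s : seq nat.
Hypothesis uniq_s : uniq s.

Lemma multiplicityP :
  [/\ 0 < multiplicity s, forall x, 0 < x < multiplicity s -> x \in s
    & multiplicity s \notin s].
Proof.
have [x hx nx] : exists2 x, 1 <= x < 1 + (size s).+1 & x \notin s.
  have [h|/allPn[x]] := boolP (all (mem s) (iota 1 (size s).+1)); last by rewrite mem_iota; exists x.
  by have := uniq_leq_size (iota_uniq 1 (size s).+1) (allP h); rewrite size_iota ltnn.
have := head_filter_iota (Q := fun k => k \notin s) hx nx.
rewrite /multiplicity /=; set h := head 0 _ => -[h1 h2 h3].
by split => // [|y hy]; [lia | move: (h3 y ltac:(lia)); rewrite negbK].
Qed.

Lemma multiplicity_eq m : 0 < m -> (forall x, 0 < x < m -> x \in s) -> m \notin s ->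
  multiplicity s = m.
Proof.
move=> m0 low nm; have [h1 h2 h3] := multiplicityP.
have [h|h|//] := ltngtP (multiplicity s) m; first by move: h3; rewrite low //; lia.
by move: nm; rewrite h2 //; lia.
Qed.

End Multiplicity.

Lemma mem_map_succn (u : seq nat) y : (y \in map succn u) = (0 < y) && (y.-1 \in u).
Proof. by case: y => [|y] /=; [apply/negbTE/mapP => -[] | rewrite (mem_map succn_inj)]. Qed.

Lemma mem_map_add2 (v : seq nat) y : (y \in map (addn 2) v) = (1 < y) && (y - 2 \in v).
Proof.
case: y => [|[|y]] /=; try by apply/negbTE/mapP => -[].
by rewrite -[y.+2]/(2 + y) (mem_map (@addnI 2)) addKn.
Qed.

Lemma size_sigma_split (u v : seq nat) : size (sigma_split u v) = (size u + size v).+1.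
Proof. by rewrite /= size_cat !size_map. Qed.

Lemma last_sigma_split (u v : seq nat) : v != [::] -> last 0 (sigma_split u v) = last 0 v + 2.
Proof. by case: v => // y t _; rewrite /= last_cat /= last_map addnC. Qed.

Lemma diffs_sigma_split (u v : seq nat) : u != [::] -> v != [::] ->
  diffs (sigma_split u v) = head 0 u :: diffs u ++ (head 0 v + 2 - (last 0 u).+1) :: diffs v.
Proof.
move=> un vn; have mun : map succn u != [::] by rewrite -size_eq0 size_map size_eq0.
have mvn : map (addn 2) v != [::] by rewrite -size_eq0 size_map size_eq0.
rewrite /sigma_split -cat1s diffs_cat // ?diffs_cat // ?diffs_map_succ ?diffs_map_add; last first.
  by case: (u) un.
case: u un {mun} => // x t _; case: v vn {mvn} => // y w _ /=.
by rewrite last_map subSS subn0 addnC.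
Qed.

Lemma sorted_sigma_split (u v : seq nat) : sorted ltn (u ++ v) ->
  (forall x, x \in u ++ v -> 0 < x) -> sorted ltn (sigma_split u v).
Proof.
move=> sorted_uv pos_uv; rewrite /sigma_split (sorted_pairwise ltn_trans) /=.
move: sorted_uv; rewrite (sorted_pairwise ltn_trans) !pairwise_cat => /and3P[/allrelP lt_uv pu pv].
apply/andP; split.
  rewrite all_cat !all_map; apply/andP; split; apply/allP => x xi //=.
  by apply: pos_uv; rewrite mem_cat xi.
apply/and3P; split; rewrite ?pairwise_map //.
by apply/allrelP => x y /mapP[x' x'u ->] /mapP[y' y'v ->]; have := lt_uv x' y' x'u y'v; lia.
Qed.

Section SigmaSplit.
Variables u v : seq nat.
Hypotheses (u_neq0 : u != [::]) (v_neq0 : v != [::]).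
Hypothesis sorted_uv : sorted ltn (u ++ v).

Lemma mem_sigma_split y :
  (y \in sigma_split u v) = sigma_pred (mem (u ++ v)) (last 0 u) (head 0 v) y.
Proof.
rewrite /sigma_split /sigma_pred in_cons mem_cat mem_map_succn mem_map_add2.
rewrite (mem_catl u_neq0 v_neq0 sorted_uv) (mem_catr u_neq0 v_neq0 sorted_uv).
case: y => [|[|y]] //=; rewrite !subSS !subn0 !ltnS.
by case: (y.+1 \in u ++ v); case: (y \in u ++ v); rewrite /= ?andbT ?andbF.
Qed.

End SigmaSplit.

Section GapsetList.
Variable s : seq nat.
Hypothesis gapset_s : is_gapset s.

Lemma gapset_sorted : sorted ltn s. Proof. by case/is_gapsetP: gapset_s. Qed.

Lemma gapset_uniq : uniq s. Proof. exact: (sorted_uniq ltn_trans ltnn gapset_sorted). Qed.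

Lemma gapset_pos x : x \in s -> 0 < x. Proof. by case/is_gapsetP: gapset_s => _ /(_ x). Qed.

Lemma gapset_notin0 : 0 \notin s. Proof. by apply/negP => /gapset_pos. Qed.

Lemma gapset_split z x : z \in s -> 0 < x < z -> (x \in s) || (z - x \in s).
Proof. by case/is_gapsetP: gapset_s => _ _; apply. Qed.

Lemma gapset_le_last x : x \in s -> x <= last 0 s.
Proof. exact: sorted_leq_last gapset_sorted. Qed.

Lemma cnt_gapset : cnt (mem s) 0 (last 0 s).+1 = size s.
Proof. by rewrite cnt_mem ?gapset_uniq // => x /gapset_le_last. Qed.

Lemma gapset_multiplicity :
  [/\ 0 < multiplicity s, forall x, 0 < x < multiplicity s -> x \in s
    & multiplicity s \notin s].
Proof. exact: (multiplicityP gapset_uniq). Qed.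

End GapsetList.

Lemma sigma_split_gapset (u v : seq nat) : u != [::] -> v != [::] -> is_gapset (u ++ v) ->
  let m := multiplicity (u ++ v) in
  m <= (last 0 u).+1 -> last 0 u <= 2 * m ->
  (forall c, c \in u ++ v -> c < head 0 v + m) -> is_gapset (sigma_split u v).
Proof.
move=> un vn gs m ma a2m bound.
have [m0 low nm] := gapset_multiplicity gs.
have srt := gapset_sorted gs.
apply/is_gapsetP; split; first exact: (sorted_sigma_split srt (@gapset_pos _ gs)).
  move=> x; rewrite mem_sigma_split // /sigma_pred.
  by case/orP=> [/orP[/eqP ->|/andP[h _]]|/andP[h _]]; lia.
move=> z x; rewrite !mem_sigma_split //.
apply: (sigma_pred_split (gapset_notin0 gs) (gapset_split gs) m0 low nm _ ma bound).
- exact: notin_cat_between.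
- exact: last_lt_head.
- exact: a2m.
Qed.

Lemma head_gapset (s : seq nat) : is_gapset s -> 1 \in s -> head 0 s = 1.
Proof.
move=> gs s1; have := sorted_head_leq (gapset_sorted gs) s1.
by case: s gs s1 => //= x t gs _; have := gapset_pos gs (mem_head x t); lia.
Qed.

Section CutAtJump.
Variables (d : nat) (u v : seq nat).
Hypotheses (u_neq0 : u != [::]) (v_neq0 : v != [::]) (gapset_uv : is_gapset (u ++ v)).
Hypothesis jump_uv : head 0 v - last 0 u = d.

Lemma head_cat_jump : head 0 v = last 0 u + d.
Proof. by have := last_lt_head u_neq0 v_neq0 (gapset_sorted gapset_uv); lia. Qed.

Lemma gap_head_cat : last 0 u + d \in u ++ v.
Proof. by rewrite -head_cat_jump mem_cat mem_head0 ?orbT. Qed.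

Lemma nongap_jump x : last 0 u < x < last 0 u + d -> x \notin u ++ v.
Proof.
by rewrite -head_cat_jump; apply: (notin_cat_between u_neq0 v_neq0 (gapset_sorted gapset_uv)).
Qed.

End CutAtJump.

Lemma jumpG_cat n (u v : seq nat) : 1 < n -> u != [::] -> v != [::] -> is_gapset (u ++ v) ->
  size (u ++ v) = 3 * n + 1 -> depth (u ++ v) <= 3 -> head 0 v - last 0 u = 2 * n ->
  let m := multiplicity (u ++ v) in
  [/\ 2 * n <= m <= (last 0 u).+1, last 0 u <= 2 * m,
      forall c, c \in u ++ v -> c < head 0 v + m & last 0 (u ++ v) != 6 * n].
Proof.
move=> n_gt1; have n2 : 1 < 2 * n by lia.
move=> un vn gs sizeG dep jump_uv m.
have [m0 low nm] := gapset_multiplicity gs.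
have gap_a : last 0 u \in u ++ v by rewrite mem_cat mem_last0.
have gap_b := gap_head_cat un vn gs jump_uv.
have jump := nongap_jump un vn gs jump_uv.
have gap0 := gapset_notin0 gs; have gap_split := gapset_split gs.
have gapF : last 0 (u ++ v) \in u ++ v by apply: mem_last0; case: (u) un.
have leF := @gapset_le_last _ gs.
have genus : cnt (mem (u ++ v)) 0 (last 0 (u ++ v)).+1 = 3 * n + 1 by rewrite cnt_gapset.
have depth3 : (last 0 (u ++ v)).+1 <= 3 * m by move: dep; rewrite depth_le3.
split.
- exact: (jump_mult_bounds gap0 gap_split m0 low nm n2 gap_a gap_b jump).
- exact: (jumpG_le_2mult gap0 gap_split m0 low nm gapF leF n_gt1 gap_a gap_b jump genus depth3).
- rewrite (head_cat_jump un vn gs jump_uv).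
  exact: (jumpG_gap_lt gap0 gap_split m0 low nm gapF leF n_gt1 gap_a gap_b jump genus depth3).
- exact: (jumpG_frob_neq gap0 gap_split m0 low nm gapF leF n_gt1 gap_a gap_b jump genus depth3).
Qed.

Lemma pseudo_symmetric_sigma_split (u v : seq nat) : v != [::] ->
  pseudo_symmetric (sigma_split u v) = (last 0 (u ++ v) + 4 == 2 * (size (u ++ v)).+1).
Proof.
move=> vn; rewrite /pseudo_symmetric /frobenius /conductor /genus last_sigma_split //.
by rewrite size_sigma_split size_cat last_cat; case: (v) vn => //= y t _; rewrite -addnA.
Qed.

Lemma sigma_in_Gk_gt1 n (G : seq nat) : 1 < n -> in_Gk (2 * n) (3 * n + 1) G -> depth G <= 3 ->
  in_Gk (2 * n + 1) (3 * n + 1 + 1) (sigma (2 * n) G) && ~~ pseudo_symmetric (sigma (2 * n) G).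
Proof.
move=> n_gt1 /and3P[gs /andP[sparse has_jump] /eqP sizeG] dep; rewrite /genus in sizeG.
have /split_last_diff[u [v [EG un vn jump_uv no_jump_v]]] : 2 * n \in diffs G.
  by case/hasP: has_jump => d dG /eqP <-.
subst G; rewrite sigma_cat //.
have [/andP[m2n ma] a2m bound F6n] := jumpG_cat n_gt1 un vn gs sizeG dep jump_uv.
have hb := head_cat_jump un vn gs jump_uv.
have head1 : head 0 u = 1.
  have [_ low _] := gapset_multiplicity gs.
  have := head_gapset gs (low 1 ltac:(clear -m2n n_gt1; lia)).
  by case: (u) un.
rewrite pseudo_symmetric_sigma_split // sizeG.
move: sparse; rewrite diffs_cat // jump_uv all_cat /= => /and3P[sparse_u _ sparse_v].
apply/andP; split; last by move: F6n; clear; lia.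
apply/and3P; split.
- exact: sigma_split_gapset.
- rewrite /pure_sparse diffs_sigma_split // head1 hb /= all_cat has_cat /=.
  rewrite (_ : last 0 u + 2 * n + 2 - (last 0 u).+1 = 2 * n + 1); last by clear; lia.
  rewrite eqxx !orbT leqnn andbT addn1 /=.
  by rewrite (sub_all _ sparse_u) ?(sub_all _ sparse_v) // => d /=; lia.
- by move: sizeG; rewrite /genus size_sigma_split size_cat => ->; rewrite !addn1.
Qed.

Section Unshift.
Variables u v : seq nat.
Hypotheses (u_neq0 : u != [::]) (v_neq0 : v != [::]) (sorted_uv : sorted ltn (u ++ v)).
Hypotheses (head_u : head 0 u = 1) (behead_u_neq0 : behead u != [::]).
Hypothesis jump_gt1 : (last 0 u).+1 < head 0 v.

Definition unshift_l := map predn (behead u).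
Definition unshift_r := map (subn^~ 2) v.

Lemma u_cons1 : u = 1 :: behead u.
Proof. by case: (u) u_neq0 head_u => //= x t _ ->. Qed.

Lemma behead_u_gt1 x : x \in behead u -> 1 < x.
Proof.
have := sorted_catl sorted_uv; rewrite u_cons1 (sorted_pairwise ltn_trans) /=.
by case/andP => /allP h _ /h.
Qed.

Lemma last_u_gt0 : 0 < last 0 u.
Proof. by have := sorted_head_leq (sorted_catl sorted_uv) (mem_last0 u_neq0); rewrite head_u. Qed.

Lemma v_gt2 x : x \in v -> 2 < x.
Proof. by move/(sorted_head_leq (sorted_catr sorted_uv)); move: jump_gt1 last_u_gt0; lia. Qed.

Lemma map_succn_unshift_l : map succn unshift_l = behead u.
Proof. by rewrite -map_comp map_id_in // => x /behead_u_gt1 /=; lia. Qed.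

Lemma map_add2_unshift_r : map (addn 2) unshift_r = v.
Proof. by rewrite -map_comp map_id_in // => x /v_gt2 /=; lia. Qed.

Lemma unshift_neq0 : unshift_l != [::] /\ unshift_r != [::].
Proof. by rewrite -!size_eq0 !size_map !size_eq0. Qed.

Lemma sigma_split_unshift : sigma_split unshift_l unshift_r = u ++ v.
Proof. by rewrite /sigma_split map_succn_unshift_l map_add2_unshift_r [in RHS]u_cons1. Qed.

Lemma last_unshift_l : last 0 unshift_l = (last 0 u).-1.
Proof.
by rewrite [in RHS]u_cons1 /= -[0]/(predn 1) last_map.
Qed.

Lemma head_unshift_r : head 0 unshift_r = head 0 v - 2.
Proof. by rewrite /unshift_r; case: (v) v_neq0. Qed.

Lemma mem_unshift x : (x \in unshift_l ++ unshift_r) =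
  sigma_inv_pred (mem (u ++ v)) (last 0 u) (head 0 v) x.
Proof.
rewrite mem_cat /sigma_inv_pred /= -(mem_map succn_inj unshift_l x) map_succn_unshift_l.
rewrite -(mem_map (@addnI 2) unshift_r x) map_add2_unshift_r.
rewrite (mem_catr u_neq0 v_neq0 sorted_uv) andbC.
congr (_ || _); case: x => [|x] /=; first by apply/negP => /behead_u_gt1.
have -> : (x.+2 \in behead u) = (x.+2 \in u) by rewrite [in RHS]u_cons1 inE.
by rewrite (mem_catl u_neq0 v_neq0 sorted_uv) andbC.
Qed.

Lemma sorted_unshift : sorted ltn (unshift_l ++ unshift_r).
Proof.
have := sorted_uv; rewrite -sigma_split_unshift /sigma_split (sorted_pairwise ltn_trans) /=.
case/andP=> _; rewrite pairwise_cat [pairwise _ (map succn _)]pairwise_map.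
rewrite [pairwise _ (map (addn 2) _)]pairwise_map => /and3P[_ pl pr].
rewrite (sorted_pairwise ltn_trans) pairwise_cat; apply/and3P; split; [|exact: pl|exact: pr].
apply/allrelP => x y xl yr.
have xu : x.+1 \in u by rewrite u_cons1 inE -map_succn_unshift_l (mem_map succn_inj) xl orbT.
have xa := sorted_leq_last (sorted_catl sorted_uv) xu.
have yv : 2 + y \in v by rewrite -map_add2_unshift_r (mem_map (@addnI 2)).
have yb := sorted_head_leq (sorted_catr sorted_uv) yv.
by move: xa yb jump_gt1; clear; lia.
Qed.

Lemma diffs_unshift :
  diffs (unshift_l ++ unshift_r) = diffs (behead u) ++ (head 0 v - (last 0 u).+1) :: diffs v.
Proof.
have [ln rn] := unshift_neq0.
rewrite diffs_cat // -{1}map_succn_unshift_l -{2}map_add2_unshift_r diffs_map_succ diffs_map_add.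
rewrite head_unshift_r last_unshift_l; congr (_ ++ _ :: _).
by move: jump_gt1 last_u_gt0; lia.
Qed.

Lemma diffs_unshift_r : diffs unshift_r = diffs v.
Proof. by rewrite -[in RHS]map_add2_unshift_r diffs_map_add. Qed.

Lemma last_unshift : last 0 (unshift_l ++ unshift_r) = last 0 (u ++ v) - 2.
Proof.
rewrite !last_cat /unshift_r; case: (v) v_neq0 => // y t _.
by rewrite map_cons !last_cons (last_map (subn^~ 2) t y).
Qed.

Lemma size_unshift : size (unshift_l ++ unshift_r) = (size (u ++ v)).-1.
Proof. by rewrite !size_cat !size_map size_behead; case: (u) u_neq0. Qed.

Lemma sigma_unshift k : head 0 v - (last 0 u).+1 = k -> k \notin diffs v ->
  sigma k (unshift_l ++ unshift_r) = u ++ v.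
Proof.
move=> jump no_jump; have [ln rn] := unshift_neq0.
rewrite sigma_cat // ?diffs_unshift_r ?sigma_split_unshift // head_unshift_r last_unshift_l.
by rewrite -jump; move: jump_gt1 last_u_gt0; lia.
Qed.

Lemma diffs_u : diffs u = (head 0 (behead u) - 1) :: diffs (behead u).
Proof. by rewrite {1}u_cons1 -cat1s diffs_cat. Qed.

Lemma pure_sparse_unshift k : head 0 v - (last 0 u).+1 = k ->
  all (fun d => d <= k.+1) (diffs u ++ diffs v) -> k.+1 \notin diffs u ++ diffs v ->
  pure_sparse k (unshift_l ++ unshift_r).
Proof.
move=> jump sparse no_jump.
rewrite /pure_sparse diffs_unshift jump all_cat has_cat /= eqxx leqnn !orbT andbT andbC /=.
rewrite -all_cat; apply/allP => d hd.
have hd' : d \in diffs u ++ diffs v.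
  by move: hd; rewrite !mem_cat diffs_u inE => /orP[] ->; rewrite ?orbT.
have : d != k.+1 by apply: contraNneq no_jump => <-.
by have := allP sparse d hd'; lia.
Qed.

End Unshift.

Section JumpHCat.
Variables (n : nat) (u v : seq nat).
Hypothesis n_gt1 : 1 < n.
Hypotheses (u_neq0 : u != [::]) (v_neq0 : v != [::]) (gapset_uv : is_gapset (u ++ v)).
Hypothesis size_uv : size (u ++ v) = 3 * n + 2.
Hypothesis frob_neq : last 0 (u ++ v) != 6 * n + 2.
Hypothesis jump_uv : head 0 v - last 0 u = 2 * n + 1.

Let gap0 := gapset_notin0 gapset_uv.
Let gap_split := gapset_split gapset_uv.
Let mult := gapset_multiplicity gapset_uv.
Let gapF : last 0 (u ++ v) \in u ++ v.
Proof. by apply: mem_last0; case: (u) u_neq0. Qed.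
Let leF := @gapset_le_last _ gapset_uv.
Let gap_a : last 0 u \in u ++ v.
Proof. by rewrite mem_cat mem_last0. Qed.
Let gap_b := gap_head_cat u_neq0 v_neq0 gapset_uv jump_uv.
Let jump := nongap_jump u_neq0 v_neq0 gapset_uv jump_uv.
Let genus : cnt (mem (u ++ v)) 0 (last 0 (u ++ v)).+1 = 3 * n + 2.
Proof. by rewrite cnt_gapset. Qed.

Lemma jumpH_cat : let m := multiplicity (u ++ v) in
  [/\ 2 * n + 1 <= m <= (last 0 u).+1, (last 0 u).+2 <= 2 * m,
      forall c, c \in u ++ v -> c < head 0 v + m
    & (last 0 (u ++ v)).+2 <= 3 * m].
Proof.
have [m0 low nm] := mult; split.
- have n1 : 1 < 2 * n + 1 by clear -n_gt1; lia.
  exact: (jump_mult_bounds gap0 gap_split m0 low nm n1 gap_a gap_b jump).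
- exact: (jumpH_le_2mult gap0 gap_split m0 low nm gapF leF n_gt1 gap_a gap_b jump genus frob_neq).
- rewrite (head_cat_jump u_neq0 v_neq0 gapset_uv jump_uv).
  exact: (jumpH_gap_lt gap0 gap_split m0 low nm gapF leF n_gt1 gap_a gap_b jump genus frob_neq).
- exact: (jumpH_depth gap0 gap_split m0 low nm gapF leF n_gt1 gap_a gap_b jump genus frob_neq).
Qed.

Lemma jumpH_cat_unique : 2 * n + 1 \notin diffs u.
Proof.
have [m0 low nm] := mult; apply/negP => /mem_diffsP[s1 [a1 [b1 [s2 [Eu eab]]]]].
have srt : sorted ltn (s1 ++ [:: a1, b1 & s2 ++ v]).
  by move: (gapset_sorted gapset_uv); rewrite Eu -catA.
have [ab1 between] := sorted_adjacent srt.
have eb1 : b1 = a1 + (2 * n + 1) by clear -eab ab1; lia.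
have mem_uv x : x \in s1 ++ [:: a1, b1 & s2 ++ v] = (x \in u ++ v) by rewrite Eu -catA.
have b1a : b1 <= last 0 u.
  apply: (sorted_leq_last (sorted_catl (gapset_sorted gapset_uv))).
  by rewrite Eu mem_cat !inE eqxx !orbT.
apply: (jumpH_unique gap0 gap_split m0 low nm gapF leF n_gt1 gap_a gap_b jump genus frob_neq
  (a1 := a1)).
- by rewrite -eb1.
- by change (a1 \in u ++ v); rewrite -mem_uv mem_cat !inE eqxx orbT.
- by change (a1 + (2 * n + 1) \in u ++ v); rewrite -eb1 -mem_uv mem_cat !inE eqxx !orbT.
- by move=> x hx; change (x \notin u ++ v); rewrite -mem_uv; apply: between; rewrite eb1.
Qed.

Lemma jumpH_cat_no_jump : 2 * n \notin diffs v.
Proof.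
have [m0 low nm] := mult; apply/negP => /mem_diffsP[s1 [c1 [c2 [s2 [Ev ec]]]]].
have srt : sorted ltn ((u ++ s1) ++ [:: c1, c2 & s2]).
  by move: (gapset_sorted gapset_uv); rewrite Ev catA.
have [c12 _] := sorted_adjacent srt.
have ec2 : c2 = c1 + 2 * n by clear -ec c12; lia.
have c1v : c1 \in v by rewrite Ev mem_cat inE eqxx orbT.
have Pc1 : c1 \in u ++ v by rewrite mem_cat c1v orbT.
have Pc2 : c1 + 2 * n \in u ++ v by rewrite -ec2 mem_cat Ev mem_cat !inE eqxx !orbT.
have := sorted_head_leq (sorted_catr (gapset_sorted gapset_uv)) c1v.
rewrite (head_cat_jump u_neq0 v_neq0 gapset_uv jump_uv) => bc1.
have := jumpH_no_gap_pair gap0 gap_split m0 low nm gapF leF n_gt1 gap_a gap_b jump genus frob_neq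
  bc1 Pc1.
by move/negP; apply.
Qed.

End JumpHCat.

Section UnshiftGapset.
Variables u v : seq nat.
Hypotheses (u_neq0 : u != [::]) (v_neq0 : v != [::]) (gapset_uv : is_gapset (u ++ v)).
Hypotheses (head_u : head 0 u = 1) (behead_u_neq0 : behead u != [::]).
Hypothesis jump_gt2 : (last 0 u).+2 < head 0 v.
Hypothesis mult_le : multiplicity (u ++ v) <= (last 0 u).+1.
Hypothesis last_le_2mult : (last 0 u).+2 <= 2 * multiplicity (u ++ v).
Hypothesis gap_lt_jump_add_mult : forall c, c \in u ++ v -> c < head 0 v + multiplicity (u ++ v).

Let sorted_uv := gapset_sorted gapset_uv.
Let jump_gt1 : (last 0 u).+1 < head 0 v := ltnW jump_gt2.
Let mem_G := mem_unshift u_neq0 v_neq0 sorted_uv head_u behead_u_neq0 jump_gt1.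

Lemma gapset_unshift : is_gapset (unshift_l u ++ unshift_r v).
Proof.
apply/is_gapsetP; split.
- exact: (sorted_unshift u_neq0 v_neq0 sorted_uv head_u behead_u_neq0 jump_gt1).
- move=> x; rewrite mem_G /sigma_inv_pred => /orP[/andP[/andP[]] //|/andP[hb _]].
  by case: x hb => // hb; move: jump_gt2 hb; clear; lia.
have [m0 low nm] := gapset_multiplicity gapset_uv.
move=> z x; rewrite !mem_G.
apply: (sigma_inv_pred_split (gapset_notin0 gapset_uv) (gapset_split gapset_uv) m0 low nm _
  mult_le gap_lt_jump_add_mult jump_gt2 last_le_2mult).
exact: (notin_cat_between u_neq0 v_neq0 sorted_uv).
Qed.

Lemma multiplicity_unshift :
  multiplicity (unshift_l u ++ unshift_r v) = (multiplicity (u ++ v)).-1.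
Proof.
have [m0 low nm] := gapset_multiplicity gapset_uv.
have a0 := last_u_gt0 u_neq0 sorted_uv head_u.
apply: multiplicity_eq; first exact: gapset_uniq gapset_unshift.
- by move: a0 last_le_2mult; clear; lia.
- move=> x hx; rewrite mem_G /sigma_inv_pred /= low ?andbT; last by move: hx; clear; lia.
  by apply/orP; left; apply/andP; split; move: hx mult_le; clear; lia.
rewrite mem_G /sigma_inv_pred /= negb_or; apply/andP; split.
  by rewrite prednK // (negbTE nm) andbF.
by apply/nandP; left; move: mult_le jump_gt2; clear; lia.
Qed.

Lemma depth_unshift : (last 0 (u ++ v)).+2 <= 3 * multiplicity (u ++ v) ->
  depth (unshift_l u ++ unshift_r v) <= 3.
Proof.
move=> depth3; have a0 := last_u_gt0 u_neq0 sorted_uv head_u.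
have mG := multiplicity_unshift.
have mG0 : 0 < multiplicity (unshift_l u ++ unshift_r v).
  by rewrite mG; move: a0 last_le_2mult; clear; lia.
rewrite depth_le3 // mG /conductor (last_unshift u v_neq0).
by move: mG0 depth3; rewrite mG; clear; lia.
Qed.

End UnshiftGapset.

Lemma sigma_surj_gt1 n (H : seq nat) : 1 < n -> in_Gk (2 * n + 1) (3 * n + 1 + 1) H ->
  ~~ pseudo_symmetric H ->
  exists G, [/\ in_Gk (2 * n) (3 * n + 1) G, depth G <= 3 & sigma (2 * n) G = H].
Proof.
move=> n_gt1 /and3P[gs /andP[sparse has_jump] /eqP sizeH] nps; rewrite /genus -addnA in sizeH.
have /split_last_diff[u [v [EH un vn jump_uv no_jump_v]]] : 2 * n + 1 \in diffs H.
  by case/hasP: has_jump => d dH /eqP <-.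
subst H.
have frob_neq : last 0 (u ++ v) != 6 * n + 2.
  by move: nps; rewrite /pseudo_symmetric /frobenius /conductor /genus sizeH; clear; lia.
have [/andP[m2n ma] a2m bound depth3] := jumpH_cat n_gt1 un vn gs sizeH frob_neq jump_uv.
have unique := jumpH_cat_unique n_gt1 un vn gs sizeH frob_neq jump_uv.
have hb := head_cat_jump un vn gs jump_uv.
have head1 : head 0 u = 1.
  have [_ low _] := gapset_multiplicity gs.
  by have := head_gapset gs (low 1 ltac:(clear -m2n n_gt1; lia)); case: (u) un.
have bun : behead u != [::].
  apply/negP => /eqP bu0; move: ma m2n n_gt1.
  by rewrite (u_cons1 un head1) bu0 /=; clear; lia.
have jump_gt2 : (last 0 u).+2 < head 0 v by rewrite hb; clear -n_gt1; lia.
have jump_2n : head 0 v - (last 0 u).+1 = 2 * n by rewrite hb; clear; lia.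
have sorted_uv := gapset_sorted gs; have jump_gt1 := ltnW jump_gt2.
exists (unshift_l u ++ unshift_r v); split.
- apply/and3P; split; first exact: gapset_unshift.
    apply: (pure_sparse_unshift un vn sorted_uv head1 bun jump_gt1 jump_2n).
      by move: sparse; rewrite diffs_cat // !all_cat /= addn1 => /and3P[-> _ ->].
    by rewrite mem_cat negb_or -addn1 unique no_jump_v.
  by rewrite /genus (size_unshift v un) sizeH; apply/eqP; clear; lia.
- exact: depth_unshift.
- exact: (sigma_unshift un vn sorted_uv head1 bun jump_gt1 jump_2n
    (jumpH_cat_no_jump n_gt1 un vn gs sizeH frob_neq jump_uv)).
Qed.

Fixpoint bitseqs N : seq bitseq :=
  if N is N'.+1 then [seq true :: b | b <- bitseqs N'] ++ [seq false :: b | b <- bitseqs N']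
  else [:: [::]].

Lemma mem_bitseqs (b : bitseq) : b \in bitseqs (size b).
Proof.
have cons_inj (x : bool) : injective (cons x) by move=> ? ? [].
by elim: b => [|[] b IH] //=; rewrite mem_cat !(mem_map (cons_inj _)) IH ?orbT.
Qed.

Lemma sorted_mask_iota N p (s : seq nat) : sorted ltn s ->
  (forall x, x \in s -> p <= x < p + N) -> exists2 b, size b = N & s = mask b (iota p N).
Proof.
move=> srt hs; exists (map (mem s) (iota p N)); first by rewrite size_map size_iota.
rewrite -filter_mask; apply: (irr_sorted_eq ltn_trans ltnn) => //.
  exact/sorted_filter/iota_ltn_sorted/ltn_trans.
by move=> x; rewrite mem_filter mem_iota /=; case xs: (x \in s); rewrite // (hs x xs).
Qed.

Lemma gapset_lt_2genus (s : seq nat) x : is_gapset s -> x \in s -> x < 2 * size s.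
Proof.
move=> gs xs; have sn : s != [::] by case: (s) xs.
have := genus_ge_frob (gapset_split gs) (mem_last0 sn); rewrite cnt_gapset //.
by have := gapset_le_last gs xs; clear; lia.
Qed.

Lemma gapset_mask (s : seq nat) : is_gapset s ->
  exists2 b, size b = (2 * size s).-1 & s = mask b (iota 1 (2 * size s).-1).
Proof.
move=> gs; apply: sorted_mask_iota (gapset_sorted gs) _ => x xs.
by have := gapset_pos gs xs; have := gapset_lt_2genus gs xs; clear; lia.
Qed.

Definition sigma_in_Gk1_at (G : seq nat) :=
  (in_Gk 2 4 G && (depth G <= 3)) ==> (in_Gk 3 5 (sigma 2 G) && ~~ pseudo_symmetric (sigma 2 G)).

Definition sigma_surj1_at (H : seq nat) :=
  (in_Gk 3 5 H && ~~ pseudo_symmetric H) ==>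
  has (fun b => let G := mask b (iota 1 7) in [&& in_Gk 2 4 G, depth G <= 3 & sigma 2 G == H])
      (bitseqs 7).

Lemma sigma_in_Gk1_all : all (fun b => sigma_in_Gk1_at (mask b (iota 1 7))) (bitseqs 7).
Proof. by rewrite /sigma_in_Gk1_at /sigma /alpha unlock; vm_compute. Qed.

Lemma sigma_surj1_all : all (fun b => sigma_surj1_at (mask b (iota 1 9))) (bitseqs 9).
Proof. by rewrite /sigma_surj1_at /sigma /alpha unlock; vm_compute. Qed.

Lemma sigma_in_Gk1 (G : seq nat) : in_Gk 2 4 G -> depth G <= 3 ->
  in_Gk 3 5 (sigma 2 G) && ~~ pseudo_symmetric (sigma 2 G).
Proof.
move=> GG dG; have /and3P[gs _ /eqP sizeG] := GG.
have [b sb EG] := gapset_mask gs; rewrite [size G]sizeG /= in sb EG.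
have := allP sigma_in_Gk1_all b; rewrite -sb mem_bitseqs sb -EG => /(_ isT).
by rewrite /sigma_in_Gk1_at GG dG.
Qed.

Lemma sigma_surj1 (H : seq nat) : in_Gk 3 5 H -> ~~ pseudo_symmetric H ->
  exists G, [/\ in_Gk 2 4 G, depth G <= 3 & sigma 2 G = H].
Proof.
move=> HH nps; have /and3P[gs _ /eqP sizeH] := HH.
have [b sb EH] := gapset_mask gs; rewrite [size H]sizeH /= in sb EH.
have := allP sigma_surj1_all b; rewrite -sb mem_bitseqs sb -EH => /(_ isT).
rewrite /sigma_surj1_at HH nps => /hasP[b' _ /and3P[GG dG /eqP sG]].
by exists (mask b' (iota 1 7)).
Qed.

Lemma sigma_in_Gk n (G : seq nat) : 0 < n -> in_Gk (2 * n) (3 * n + 1) G -> depth G <= 3 ->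
  in_Gk (2 * n + 1) (3 * n + 1 + 1) (sigma (2 * n) G) && ~~ pseudo_symmetric (sigma (2 * n) G).
Proof.
move=> n0; have [->|n_gt1] : n = 1 \/ 1 < n by lia.
  exact: sigma_in_Gk1.
exact: sigma_in_Gk_gt1.
Qed.

Lemma sigma_surj n (H : seq nat) : 0 < n -> in_Gk (2 * n + 1) (3 * n + 1 + 1) H ->
  ~~ pseudo_symmetric H ->
  exists G, [/\ in_Gk (2 * n) (3 * n + 1) G, depth G <= 3 & sigma (2 * n) G = H].
Proof.
move=> n0; have [->|n_gt1] : n = 1 \/ 1 < n by lia.
  exact: sigma_surj1.
exact: sigma_surj_gt1.
Qed.

Theorem mainTheorem2 (n : nat) (hn : 0 < n) :
  let g := 3 * n + 1 in
  (forall G : seq nat, in_Gk (2 * n) g G -> depth G <= 3 ->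
     ~~ pseudo_symmetric (sigma (2 * n) G)) /\
  (forall H : seq nat,
     (in_Gk (2 * n + 1) (g + 1) H && ~~ pseudo_symmetric H) <->
     (exists G : seq nat,
        [/\ in_Gk (2 * n) g G, depth G <= 3 & sigma (2 * n) G = H])).
Proof.
move=> g; split=> [G GG dG | H]; first by case/andP: (sigma_in_Gk hn GG dG).
split=> [/andP[HH nps] | [G [GG dG <-]]]; first exact: sigma_surj.
exact: sigma_in_Gk.
Qed.
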